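(* Let $P$ be a finite poset. Consider the following (nondeterministic) algorithm: set $P_0:=P$; at step $m$, if $P_m$ contains an $N$, choose some $N$ in $P_m$ and let $P_{m+1}$ be obtained from $P_m$ by adding one dummy vertex on the diagonal edge of that $N$; stop when $P_m$ is $N$-free. Then, whatever choices are made, the algorithm stops, and it stops on $S_N(S_N(P))$, which is the smallest $N$-free poset obtained as a barycentric subdivision of $\mathrm{Diag}(P)$. Hence the resulting poset and the number of steps do not depend on the choices of diagonal edges made at each step.
   Context: For a poset $P$, a covering pair is a pair $(x,y)$ with $x<y$ and no $z$ with $x<z<y$; we write $x\prec y$. $\mathrm{Diag}(P)$ is the directed graph on $P$ whose edges are the covering pairs. $\mathrm{Inc}(P)$ is the set of pairs of incomparable elements. Four elements $a,b,c,d$ of $P$ form an $N$ in $P$ if $b\prec c$, $a\prec c$, $b\prec d$ and $(a,d)\in\mathrm{Inc}(P)$; the pair $(b,c)$ is then the diagonal edge of this $N$. $P$ is $N$-free if it contains no $N$. $N_{diag}(P)$ denotes the set of diagonal edges of all $N$'s in $P$. Adding a dummy vertex $u$ on a covering pair $(x,y)$ means adding a new element $u$ with $x\prec u\prec y$ and taking the induced (transitive) order. A barycentric subdivision of $\mathrm{Diag}(P)$ consists of adding finitely many (possibly zero) new vertices on each edge of $\mathrm{Diag}(P)$. $S_N(P)$ is the poset obtained from $P$ by adding one dummy vertex on each edge of $N_{diag}(P)$. *)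

From mathcomp Require Import all_boot.
Set Implicit Arguments. Unset Strict Implicit. Unset Printing Implicit Defensive.

(* A finite "poset candidate": a finite carrier with a boolean relation le
   (meant as the non-strict order x <= y). *)
Record fposet := FPoset { elt :> finType; ple : rel elt }.
Arguments ple : clear implicits.

Definition is_poset (P : fposet) : Prop :=
  [/\ reflexive (ple P), antisymmetric (ple P) & transitive (ple P)].

Section Notions.
Variable P : fposet.
Local Notation le := (ple P).

Definition plt (x y : P) : bool := (x != y) && le x y.

Definition covers (x y : P) : bool :=
  plt x y && [forall z : P, ~~ (plt x z && plt z y)].

Definition incomp (a d : P) : bool := ~~ le a d && ~~ le d a.

Definition isN (a b c d : P) : bool :=
  [&& covers b c, covers a c, covers b d & incomp a d].

Definition Ndiag (b c : P) : bool := [exists a : P, exists d : P, isN a b c d].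

Definition Nfree : bool := [forall a : P, forall b : P, forall c : P, forall d : P,
  ~~ isN a b c d].

(* Barycentric subdivision of Diag(P): k x y new vertices on each edge (x,y);
   k must vanish on non-edges (see [valid_subdiv]). The new vertices on the
   edge (x,y) are (x,y,i), i < k x y, in the order x ≺ (x,y,0) ≺ ... ≺ y. *)
Variable k : P -> P -> nat.
Definition kmax : nat := \max_(p : P * P) k p.1 p.2.
Definition sd_raw : finType := (P + (P * P * 'I_(kmax.+1)))%type.
Definition sd_ok (u : sd_raw) : bool :=
  match u with
  | inl _ => true
  | inr (x, y, i) => covers x y && (i < k x y)
  end.
Definition sd_carrier : finType := {u : sd_raw | sd_ok u}.
(* the order generated by the subdivided diagram (reachability) *)
Definition sd_le_raw (u v : sd_raw) : bool :=
  match u, v with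
  | inl a, inl b => le a b
  | inl a, inr (x, _, _) => le a x
  | inr (_, y, _), inl b => le y b
  | inr (x, y, i), inr (x', y', j) => (((x, y) == (x', y')) && (i <= j)) || le y x'
  end.
Definition subdiv : fposet :=
  @FPoset sd_carrier (fun u v => sd_le_raw (val u) (val v)).
End Notions.

Definition valid_subdiv (P : fposet) (k : P -> P -> nat) : Prop :=
  forall x y : P, 0 < k x y -> covers x y.

Definition add_dummy (P : fposet) (x y : P) : fposet :=
  subdiv (fun a b : P => nat_of_bool ((a, b) == (x, y))).

Definition S_N (P : fposet) : fposet :=
  subdiv (fun b c : P => nat_of_bool (Ndiag b c)).

Definition iso (P Q : fposet) : Prop :=
  exists f : P -> Q, bijective f /\ forall x y : P, ple Q (f x) (f y) = ple P x y.

Definition step (P Q : fposet) : Prop :=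
  exists (b c : P), Ndiag b c /\ iso Q (add_dummy b c).

(* a run P = P_0, P_1, ..., P_n ; s = [:: P_1; ...; P_n] *)
Fixpoint run (P : fposet) (s : seq fposet) : Prop :=
  match s with
  | [::] => True
  | Q :: s' => step P Q /\ run Q s'
  end.

From mathcomp Require Import all_boot.
Set Implicit Arguments. Unset Strict Implicit. Unset Printing Implicit Defensive.

(* Up to isomorphism, a state of the algorithm is the subdivision of Diag(P) carrying one dummy
   vertex on each edge of a set S of covering pairs. A dummy vertex has a unique upper and a
   unique lower cover, so every N of that subdivision has its diagonal between two elements of
   P, and these diagonals are exactly the edges [Ndiag_sd S]; a step adds one of them to S.
   Let T be the set of edges subdivided by S_N(S_N(P)). Outside S, [Ndiag_sd S] grows with S,
   hence a run starting from the empty set stays inside T provided [Ndiag_sd T] is empty: this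
   is the combinatorial core, [SN2_edge_beside] and its dual. So every step adds a new edge of
   T, every run stops after at most |T| steps, and it stops at some S inside T with
   [Ndiag_sd S] empty. By monotonicity again, T is contained in any such S, so S = T; the same
   argument shows that every N-free subdivision puts at least one vertex on each edge of T. *)

Section PosetFacts.
Variable P : fposet.
Hypothesis HP : is_poset P.
Local Notation le := (ple P).

Lemma ple_refl (x : P) : le x x.
Proof. by case: HP => r _ _; apply: r. Qed.

Lemma ple_trans (x y z : P) : le x y -> le y z -> le x z.
Proof. by case: HP => _ _ t; apply: t. Qed.

Lemma ple_anti (x y : P) : le x y -> le y x -> x = y.
Proof. by case: HP => _ a _ h1 h2; apply: a; rewrite h1 h2. Qed.

Lemma pltW (x y : P) : plt x y -> le x y.
Proof. by case/andP. Qed.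

Lemma plt_neq (x y : P) : plt x y -> x != y.
Proof. by case/andP. Qed.

Lemma pltI (x y : P) : x != y -> le x y -> plt x y.
Proof. by move=> h1 h2; rewrite /plt h1 h2. Qed.

Lemma plt_nge (x y : P) : plt x y -> ~~ le y x.
Proof. by case/andP=> ne lxy; apply: contra ne => lyx; rewrite (ple_anti lxy lyx). Qed.

Lemma ple_plt_trans (x y z : P) : le x y -> plt y z -> plt x z.
Proof.
move=> lxy lyz; apply: pltI; last exact: ple_trans lxy (pltW lyz).
by apply: contraNneq (plt_nge lyz) => exz; rewrite -exz.
Qed.

Lemma plt_ple_trans (x y z : P) : plt x y -> le y z -> plt x z.
Proof.
move=> lxy lyz; apply: pltI; last exact: ple_trans (pltW lxy) lyz.
by apply: contraNneq (plt_nge lxy) => exz; rewrite exz.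
Qed.

Lemma plt_trans (x y z : P) : plt x y -> plt y z -> plt x z.
Proof. by move=> lxy /pltW; apply: plt_ple_trans. Qed.

Lemma covers_plt (x y : P) : covers x y -> plt x y.
Proof. by case/andP. Qed.

Lemma covers_le (x y : P) : covers x y -> le x y.
Proof. by move/covers_plt/pltW. Qed.

Lemma covers_neq (x y : P) : covers x y -> x != y.
Proof. by move/covers_plt/plt_neq. Qed.

Lemma covers_gap (x y z : P) : covers x y -> plt x z -> plt z y -> False.
Proof. by case/andP=> _ /forallP /(_ z) /negP nz xz zy; apply: nz; rewrite xz zy. Qed.

Lemma covers_interval (x y z : P) : covers x y -> le x z -> le z y -> z = x \/ z = y.
Proof.
move=> cxy lxz lzy; case: (eqVneq z x) => [|nzx]; first by left.
case: (eqVneq z y) => [|nzy]; first by right.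
by case: (covers_gap cxy (pltI _ lxz) (pltI nzy lzy)); rewrite eq_sym.
Qed.

Lemma coversI (x y : P) : plt x y -> (forall z, plt x z -> plt z y -> False) -> covers x y.
Proof.
move=> lxy gap; rewrite /covers lxy; apply/forallP => z.
by apply/negP => /andP [] /gap; apply.
Qed.

Lemma covers_least_above (u m w : P) :
  plt u m -> (forall z, plt u z -> le m z) -> covers u w -> w = m.
Proof.
move=> um least cuw; apply/eqP; apply: contraT => nwm; exfalso.
by apply: (covers_gap cuw um); apply: pltI (least _ (covers_plt cuw)); rewrite eq_sym.
Qed.

Lemma covers_greatest_below (u m w : P) :
  plt m u -> (forall z, plt z u -> le z m) -> covers w u -> w = m.
Proof.
move=> mu greatest cwu; apply/eqP; apply: contraT => nwm; exfalso.
exact: (covers_gap cwu (pltI nwm (greatest _ (covers_plt cwu))) mu).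
Qed.

Lemma exists_cover_above (x y : P) : plt x y -> exists2 c, covers x c & le c y.
Proof.
move=> lxy; have Py : plt x y && le y y by rewrite lxy ple_refl.
case: (@arg_minnP _ y (fun c => plt x c && le c y) (fun c => #|[set z | plt z c]|) Py).
move=> c /andP [lxc lcy] cmin.
exists c => //; apply: coversI => // z lxz lzc.
have /cmin : plt x z && le z y by rewrite lxz (ple_trans (pltW lzc) lcy).
apply/negP; rewrite -ltnNge; apply: proper_card; apply/properP; split.
  by apply/subsetP => w; rewrite !inE => /plt_trans; apply.
by exists z; rewrite !inE ?lzc // /plt eqxx.
Qed.

End PosetFacts.

Definition dual (P : fposet) : fposet := @FPoset P (fun x y => ple P y x).

Section Duality.
Variable P : fposet.

Lemma dual_poset : is_poset P -> is_poset (dual P).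
Proof.
case=> r a t; split => //; first by move=> x y; rewrite andbC; apply: a.
by move=> y x z lyx lzy; apply: t lzy lyx.
Qed.

Lemma plt_dual (x y : P) : @plt (dual P) x y = plt y x.
Proof. by rewrite /plt eq_sym. Qed.

Lemma covers_dual (x y : P) : @covers (dual P) x y = covers y x.
Proof.
rewrite /covers plt_dual; congr (_ && _); apply: eq_forallb => z.
by rewrite !plt_dual andbC.
Qed.

Lemma exists_cover_below (x y : P) : is_poset P -> plt x y -> exists2 c, ple P x c & covers c y.
Proof.
move=> HP lxy; have lyx : @plt (dual P) y x by rewrite plt_dual.
by case: (exists_cover_above (dual_poset HP) lyx) => c; rewrite covers_dual; exists c.
Qed.

End Duality.

(* The diagonals of the N's in the subdivision of Diag(P) with one dummy vertex on each edge
   of S, read on P: a and d are the original ends of the two other edges of the N. *)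
Definition Ndiag_sd (P : fposet) (S : rel P) (x y : P) : bool :=
  [&& covers x y, ~~ S x y & [exists a : P, exists d : P,
     [&& covers a y, a != x, covers x d, d != y & [|| S a y, S x d | ~~ ple P a d]]]].

(* [Ndiag1] is N_diag(P) and [Ndiag2] is N_diag(S_N(P)) read on P, so [SN2_edge] lists the
   edges subdivided by S_N(S_N(P)) ([iso_SN2]). *)
Definition Ndiag1 (P : fposet) : rel P := @Ndiag_sd P (fun _ _ => false).
Definition Ndiag2 (P : fposet) : rel P := Ndiag_sd (@Ndiag1 P).
Definition SN2_edge (P : fposet) (x y : P) : bool := Ndiag1 x y || Ndiag2 x y.

Section NdiagSd.
Variable P : fposet.
Local Notation le := (ple P).

Lemma Ndiag_sdI (S : rel P) x y a d : covers x y -> ~~ S x y -> covers a y -> a != x ->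
  covers x d -> d != y -> [|| S a y, S x d | ~~ le a d] -> Ndiag_sd S x y.
Proof.
move=> cxy nS cay nax cxd ndy H; rewrite /Ndiag_sd cxy nS.
by apply/existsP; exists a; apply/existsP; exists d; rewrite cay nax cxd ndy.
Qed.

Lemma Ndiag_sd_covers (S : rel P) x y : Ndiag_sd S x y -> covers x y.
Proof. by case/and3P. Qed.

Lemma Ndiag_sd_notin (S : rel P) x y : Ndiag_sd S x y -> ~~ S x y.
Proof. by case/and3P. Qed.

Lemma Ndiag_sd_mono (S S' : rel P) x y : subrel S S' -> Ndiag_sd S x y -> ~~ S' x y ->
  Ndiag_sd S' x y.
Proof.
move=> sSS' /and3P [cxy _ /existsP [a /existsP [d /and5P [cay nax cxd ndy H]]]] nS'.
apply: (Ndiag_sdI (a := a) (d := d)) => //.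
by case/or3P: H => [/sSS' ->|/sSS' ->|->]; rewrite ?orbT.
Qed.

Lemma eq_Ndiag_sd (S S' : rel P) : S =2 S' -> Ndiag_sd S =2 Ndiag_sd S'.
Proof.
move=> eS x y; apply/idP/idP => h; have := Ndiag_sd_notin h.
- by rewrite eS; apply: Ndiag_sd_mono h => a b; rewrite eS.
- by rewrite -eS; apply: Ndiag_sd_mono h => a b; rewrite eS.
Qed.

Lemma ple_of_not_Ndiag1 (x y a d : P) : ~~ Ndiag1 x y -> covers x y ->
  covers a y -> a != x -> covers x d -> d != y -> le a d.
Proof.
move=> n1 cxy cay nax cxd ndy; apply: contraNT n1 => nlad.
by apply: (Ndiag_sdI (a := a) (d := d)); rewrite ?nlad ?orbT.
Qed.

Lemma Ndiag_covers (u v : P) : Ndiag u v -> covers u v.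
Proof. by case/existsP => a /existsP [d /and4P []]. Qed.

Lemma SN2_edge_covers (x y : P) : SN2_edge x y -> covers x y.
Proof. by case/orP => /Ndiag_sd_covers. Qed.

Lemma Ndiag_sd_dual (S : rel P) (x y : P) :
  @Ndiag_sd (dual P) S x y = Ndiag_sd (fun a b => S b a) y x.
Proof.
rewrite /Ndiag_sd covers_dual; congr [&& _, _ & _].
apply/existsP/existsP => [] [a /existsP [d H]];
  exists d; apply/existsP; exists a; move: H; rewrite !covers_dual /=;
  by case/and5P=> *; apply/and5P; split => //; rewrite orbCA.
Qed.

Lemma Ndiag1_dual (x y : P) : @Ndiag1 (dual P) x y = Ndiag1 y x.
Proof. exact: Ndiag_sd_dual. Qed.

Lemma SN2_edge_dual (x y : P) : @SN2_edge (dual P) x y = SN2_edge y x.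
Proof.
rewrite /SN2_edge Ndiag1_dual /Ndiag2 Ndiag_sd_dual; congr (_ || _).
by apply: eq_Ndiag_sd => a b; rewrite Ndiag1_dual.
Qed.

End NdiagSd.

Section SN2Square.
Variable P : fposet.
Hypothesis HP : is_poset P.
Local Notation le := (ple P).

Lemma square_cover (x y a d : P) : covers x y -> covers a y -> a != x ->
  covers a d -> d != y -> ~~ Ndiag1 x y -> ~~ Ndiag1 a y -> covers x d.
Proof.
move=> cxy cay nax cad ndy n1xy n1ay.
have nxa : x != a by rewrite eq_sym.
have lxd := ple_of_not_Ndiag1 n1ay cay cxy nxa cad ndy.
have nxd : x != d.
  by apply/eqP => exd; rewrite -exd in cad; apply: covers_gap cay (covers_plt cad) (covers_plt cxy).
have [d1 cxd1 ld1d] := exists_cover_above HP (pltI nxd lxd).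
have nd1y : d1 != y.
  apply/eqP => ed1y; rewrite ed1y in ld1d.
  by apply: covers_gap cad (covers_plt cay) (pltI _ ld1d); rewrite eq_sym.
have lad1 := ple_of_not_Ndiag1 n1xy cxy cay nax cxd1 nd1y.
have nd1a : d1 != a.
  apply/eqP => ed1a; rewrite ed1a in cxd1.
  exact: covers_gap cxy (covers_plt cxd1) (covers_plt cay).
by case: (covers_interval cad lad1 ld1d) => [/eqP|<-]; rewrite ?(negbTE nd1a).
Qed.

Lemma Ndiag1_transfer (x y a d : P) : covers a d -> covers x d -> covers x y ->
  covers a y -> y != d -> ~~ Ndiag1 a y -> Ndiag1 a d -> Ndiag1 x d.
Proof.
move=> cad cxd cxy cay nyd n1ay.
case/and3P=> _ _ /existsP [b /existsP [e /and5P [cbd nba cae _ /= nlbe]]].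
suff nlby : ~~ le b y.
  apply: (Ndiag_sdI (a := b) (d := y)) => //=.
  by apply: contraNneq nlby => ->; apply: covers_le cxy.
case: (eqVneq e y) => [<- //|ney].
apply/negP => lby.
have nby : b != y.
  by apply/eqP => eby; rewrite eby in cbd; apply: covers_gap cad (covers_plt cay) (covers_plt cbd).
have [c lbc ccy] := exists_cover_below HP (pltI nby lby).
have nca : c != a.
  by apply/eqP => eca; rewrite eca in lbc; apply: covers_gap cbd (pltI nba lbc) (covers_plt cad).
move/negP: nlbe; apply; apply: (ple_trans HP lbc).
exact: ple_of_not_Ndiag1 n1ay cay ccy nca cae ney.
Qed.

Lemma SN2_edge_beside (x y a d : P) : covers x y -> ~~ SN2_edge x y ->
  covers a y -> a != x -> covers x d -> d != y -> ~~ SN2_edge a y.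
Proof.
move=> cxy; rewrite negb_or => /andP [n1xy n2xy] cay nax cxd ndy.
have no1_below a' : covers a' y -> a' != x -> ~~ Ndiag1 a' y.
  by move=> ca'y na'x; apply: contra n2xy => h; apply: (Ndiag_sdI (a := a') (d := d)); rewrite ?h.
have no1_above d' : covers x d' -> d' != y -> ~~ Ndiag1 x d'.
  move=> cxd' nd'y; apply: contra n2xy => h.
  by apply: (Ndiag_sdI (a := a) (d := d')); rewrite ?h ?orbT.
have n1ay := no1_below a cay nax.
rewrite /SN2_edge (negbTE n1ay) /=; apply/negP.
case/and3P=> _ _ /existsP [a' /existsP [d' /and5P [ca'y na'a cad' nd'y H]]].
have n1a'y : ~~ Ndiag1 a' y by case: (eqVneq a' x) => [->|]; [exact: n1xy | exact: no1_below].
rewrite (ple_of_not_Ndiag1 n1ay cay ca'y na'a cad' nd'y) (negbTE n1a'y) orbF /= in H.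
have cxd' := square_cover cxy cay nax cad' nd'y n1xy n1ay.
move/negP: (no1_above d' cxd' nd'y); apply.
by apply: Ndiag1_transfer cad' cxd' cxy cay _ n1ay H; rewrite eq_sym.
Qed.

End SN2Square.

Lemma SN2_edge_beside_dual (P : fposet) (x y a d : P) : is_poset P -> covers x y ->
  ~~ SN2_edge x y -> covers a y -> a != x -> covers x d -> d != y -> ~~ SN2_edge x d.
Proof.
move=> HP cxy nxy cay nax cxd ndy; rewrite -SN2_edge_dual.
by apply: (SN2_edge_beside (dual_poset HP) (x := y) (y := x) (a := d) (d := a));
  rewrite ?covers_dual ?SN2_edge_dual // eq_sym.
Qed.

Section SN2Closure.
Variable P : fposet.
Hypothesis HP : is_poset P.

Lemma Ndiag_sd_SN2_edge (x y : P) : ~~ Ndiag_sd (@SN2_edge P) x y.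
Proof.
apply/negP => /and3P [cxy nxy /existsP [a /existsP [d /and5P [cay nax cxd ndy]]]].
have n1xy : ~~ Ndiag1 x y by move: nxy; rewrite negb_or => /andP [].
rewrite (ple_of_not_Ndiag1 n1xy cxy cay nax cxd ndy) orbF.
rewrite (negbTE (SN2_edge_beside HP cxy nxy cay nax cxd ndy)).
by rewrite (negbTE (SN2_edge_beside_dual HP cxy nxy cay nax cxd ndy)).
Qed.

Lemma SN2_edge_min (S : rel P) : (forall x y, ~~ Ndiag_sd S x y) -> subrel (@SN2_edge P) S.
Proof.
move=> noN.
have sub1 : subrel (@Ndiag1 P) S.
  by move=> x y h; apply: contraNT (noN x y); apply: Ndiag_sd_mono h.
by move=> x y /orP [/sub1 //|h]; apply: contraNT (noN x y); apply: Ndiag_sd_mono h.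
Qed.

Lemma Ndiag_sd_sub_SN2 (S : rel P) : subrel S (@SN2_edge P) -> subrel (Ndiag_sd S) (@SN2_edge P).
Proof.
move=> sS x y h; apply: contraTT (Ndiag_sd_SN2_edge x y) => nxy.
by apply/negPn; apply: Ndiag_sd_mono h nxy.
Qed.

End SN2Closure.

Section Subdivision.
Variable P : fposet.
Hypothesis HP : is_poset P.
Variable k : P -> P -> nat.
Local Notation le := (ple P).
Local Notation Q := (subdiv k).
Local Notation leQ := (ple (subdiv k)).

Definition sd_emb (a : P) : Q := exist _ (inl a) isT.

Definition sd_vertex (r : sd_raw k) (ok : sd_ok r) : Q := exist _ r ok.

Lemma leq_kmax (x y : P) : k x y <= kmax k.
Proof. exact: (leq_bigmax (F := fun p : P * P => k p.1 p.2) (x, y)). Qed.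

Lemma inr_eq (a b : P * P * 'I_(kmax k).+1) : (inr a == inr b :> sd_raw k) = (a == b).
Proof. by []. Qed.

Lemma inl_eq (a b : P) : (inl a == inl b :> sd_raw k) = (a == b).
Proof. by []. Qed.

Lemma ltn_kmaxS (x y : P) n : n < k x y -> n < (kmax k).+1.
Proof. by move=> h; apply: leq_trans h (leqW (leq_kmax x y)). Qed.

Lemma inord_lt_k (x y : P) n : n < k x y -> (inord n : 'I_(kmax k).+1) = n :> nat.
Proof. by move/ltn_kmaxS; apply: inordK. Qed.

Lemma dummy_succ (u : Q) x y i : val u = inr (x, y, i) ->
  exists m : Q, plt u m /\ forall z : Q, plt u z -> leQ m z.
Proof.
case: u => ru hu /= E; subst ru; case/andP: (hu) => cxy hi.
case: (ltnP i.+1 (k x y)) => hi1.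
  have ok : sd_ok (inr (x, y, inord i.+1) : sd_raw k) by rewrite /= cxy (inord_lt_k hi1).
  exists (sd_vertex ok); split.
    rewrite /plt -val_eqE /= inr_eq !xpair_eqE !eqxx /= -val_eqE /= (inord_lt_k hi1).
    by rewrite neq_ltn ltnSn leqnSn.
  case=> rz hz; case: rz hz => [c|[[x' y'] i']] hz; rewrite /plt -val_eqE /=.
    by [].
  rewrite inr_eq !xpair_eqE => /andP [ne /orP [/andP [/andP [/eqP ex /eqP ey] li]|->]];
    last by rewrite orbT.
  subst x' y'; rewrite !eqxx /= in ne *; rewrite (inord_lt_k hi1); apply/orP; left.
  by rewrite ltn_neqAle li andbT.
exists (sd_emb y); split.
  by rewrite /plt -val_eqE /= (ple_refl HP).
case=> rz hz; case: rz hz => [c|[[x' y'] i']] hz; rewrite /plt -val_eqE /=.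
  by [].
rewrite inr_eq !xpair_eqE => /andP [ne /orP [/andP [/andP [/eqP ex /eqP ey] li]|->//]].
subst x' y'; exfalso; case/andP: hz => _ hi'; rewrite !eqxx /= in ne.
have : i < i' by rewrite ltn_neqAle li andbT.
move=> lt; move: (leq_ltn_trans (leq_trans hi1 lt) hi'); by rewrite ltnn.
Qed.

Lemma dummy_pred (u : Q) x y i : val u = inr (x, y, i) ->
  exists m : Q, plt m u /\ forall z : Q, plt z u -> leQ z m.
Proof.
case: u => ru hu /= E; subst ru; case/andP: (hu) => cxy hi.
case: (posnP i) => hi0.
  exists (sd_emb x); split.
    by rewrite /plt -val_eqE /= (ple_refl HP).
  case=> rz hz; case: rz hz => [c|[[x' y'] i']] hz; rewrite /plt -val_eqE /=.
    by [].
  rewrite inr_eq !xpair_eqE => /andP [ne /orP [/andP [/andP [/eqP ex /eqP ey] li]|->//]].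
  subst x' y'; exfalso; rewrite !eqxx /= in ne.
  by move: li; rewrite hi0 leqn0 => /eqP e; move: ne; rewrite -val_eqE /= hi0 e.
have hi1 : i.-1 < k x y by rewrite (leq_trans _ hi) // ltnS leq_pred.
have ok : sd_ok (inr (x, y, inord i.-1) : sd_raw k) by rewrite /= cxy (inord_lt_k hi1).
exists (sd_vertex ok); split.
  rewrite /plt -val_eqE /= inr_eq !xpair_eqE !eqxx /= -val_eqE /= (inord_lt_k hi1).
  by rewrite leq_pred andbT neq_ltn -[X in _ < X](prednK hi0) ltnSn.
case=> rz hz; case: rz hz => [c|[[x' y'] i']] hz; rewrite /plt -val_eqE /=.
  by [].
rewrite inr_eq !xpair_eqE => /andP [ne /orP [/andP [/andP [/eqP ex /eqP ey] li]|->]];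
  last by rewrite orbT.
subst x' y'; rewrite !eqxx /= in ne *; rewrite (inord_lt_k hi1); apply/orP; left.
have lt : i' < i by rewrite ltn_neqAle ne li.
by rewrite -ltnS prednK.
Qed.

Lemma dummy_upper_cover_uniq (u c d : Q) x y i :
  val u = inr (x, y, i) -> covers u c -> covers u d -> c = d.
Proof.
move=> /dummy_succ [m [um least]].
by move=> /(covers_least_above um least) -> /(covers_least_above um least) ->.
Qed.

Lemma dummy_lower_cover_uniq (u c d : Q) x y i :
  val u = inr (x, y, i) -> covers c u -> covers d u -> c = d.
Proof.
move=> /dummy_pred [m [mu greatest]].
by move=> /(covers_greatest_below mu greatest) -> /(covers_greatest_below mu greatest) ->.
Qed.

Lemma sd_embE (z : Q) c : val z = inl c -> z = sd_emb c.
Proof. by move=> e; apply: val_inj. Qed.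

Lemma plt_sd_emb (x y : P) : plt (sd_emb x) (sd_emb y) = plt x y.
Proof. by rewrite /plt -val_eqE /= inl_eq. Qed.

Lemma covers_of_sd_emb (x y : P) : covers (sd_emb x) (sd_emb y) -> covers x y.
Proof.
move=> c; apply: coversI => [|z lxz lzy]; first by rewrite -plt_sd_emb (covers_plt c).
by apply: (covers_gap c (z := sd_emb z)); rewrite plt_sd_emb.
Qed.

Lemma covers_sd_emb (x y : P) : covers (sd_emb x) (sd_emb y) = covers x y && (k x y == 0).
Proof.
apply/idP/idP.
  move=> c; have cxy := covers_of_sd_emb c.
  rewrite cxy eqn0Ngt; apply/negP => hk.
  have ok : sd_ok (inr (x, y, inord 0) : sd_raw k) by rewrite /= cxy (inord_lt_k hk).
  by apply: (covers_gap c (z := sd_vertex ok)); rewrite /plt -val_eqE /= (ple_refl HP).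
case/andP => cxy /eqP k0; apply: coversI; first by rewrite plt_sd_emb (covers_plt cxy).
move=> z; have hz := valP z; case E: (val z) hz => [c|[[x' y'] i']] hz.
  by rewrite (sd_embE E) !plt_sd_emb; exact: covers_gap cxy.
rewrite /plt -!val_eqE /= E /= => lxx' ly'y.
case/andP: hz => cx'y' hi'.
have lxy' : le x y' := ple_trans HP lxx' (covers_le cx'y').
case: (covers_interval cxy lxy' ly'y) => ey'.
  subst y'; move: (covers_plt cx'y') => /(plt_nge HP); by rewrite lxx'.
subst y'.
have lx'y : le x' y := covers_le cx'y'.
case: (covers_interval cxy lxx' lx'y) => ex'.
  by subst x'; rewrite k0 in hi'.
by subst x'; move: (covers_neq cx'y'); rewrite eqxx.
Qed.

Lemma lower_covers_sd_emb (w : Q) y : covers w (sd_emb y) ->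
  exists2 a, covers a y & (k a y = 0 -> w = sd_emb a).
Proof.
move=> c; case E: (val w) (valP w) => [a|[[a y'] i]] hw.
  by exists a => //; move: c; rewrite (sd_embE E) covers_sd_emb => /andP [].
case/andP: hw => cay' hi.
suff ey : y' = y by exists a => [|k0]; [rewrite -ey | rewrite ey k0 in hi].
have := covers_plt c; rewrite /plt -val_eqE /= E /= => ly'y.
apply/eqP; apply: contraT => ne; exfalso.
apply: (covers_gap c (z := sd_emb y')); last by rewrite plt_sd_emb pltI.
by rewrite /plt -val_eqE /= E /= (ple_refl HP).
Qed.

Lemma upper_covers_sd_emb (w : Q) x : covers (sd_emb x) w ->
  exists2 d, covers x d & (k x d = 0 -> w = sd_emb d).
Proof.
move=> c; case E: (val w) (valP w) => [d|[[x' d] i]] hw.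
  by exists d => //; move: c; rewrite (sd_embE E) covers_sd_emb => /andP [].
case/andP: hw => cx'd hi.
suff ex : x' = x by exists d => [|k0]; [rewrite -ex | rewrite ex k0 in hi].
have := covers_plt c; rewrite /plt -val_eqE /= E /= => lxx'.
apply/eqP; apply: contraT => ne; exfalso.
apply: (covers_gap c (z := sd_emb x')); first by rewrite plt_sd_emb pltI // eq_sym.
by rewrite /plt -val_eqE /= E /= (ple_refl HP).
Qed.

Lemma exists_lower_cover_sd (a y : P) : covers a y -> exists w : Q, covers w (sd_emb y) /\
  ((val w = inl a /\ k a y = 0) \/ (exists i, val w = inr (a, y, i))).
Proof.
move=> cay; case: (posnP (k a y)) => hk.
  by exists (sd_emb a); split; [rewrite covers_sd_emb cay hk | left].
have hi1 : (k a y).-1 < k a y by rewrite prednK.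
have ok : sd_ok (inr (a, y, inord (k a y).-1) : sd_raw k) by rewrite /= cay (inord_lt_k hi1).
exists (sd_vertex ok); split; last by right; eexists.
apply: coversI; first by rewrite /plt -val_eqE /= (ple_refl HP).
move=> z; have hz := valP z; case E: (val z) hz => [c|[[x' y'] i']] hz.
  rewrite (sd_embE E) plt_sd_emb /plt -val_eqE /= => lyc /andP [ne lcy].
  by move: ne; rewrite (ple_anti HP lcy lyc) eqxx.
rewrite /plt -!val_eqE /= E /= inr_eq !xpair_eqE.
move=> /andP [ne /orP [/andP [/andP [/eqP ex /eqP ey] li]|lyx']] ly'y.
  subst x' y'; move: ne; rewrite !eqxx /= -val_eqE /= (inord_lt_k hi1).
  case/andP: hz => _ hi'.
  rewrite (inord_lt_k hi1) in li.
  move=> /negP; apply; rewrite eqn_leq li /= -ltnS prednK //.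
case/andP: hz => cx'y' _.
move: (covers_plt cx'y') => /(plt_nge HP); by rewrite (ple_trans HP ly'y lyx').
Qed.

Lemma exists_upper_cover_sd (x d : P) : covers x d -> exists w : Q, covers (sd_emb x) w /\
  ((val w = inl d /\ k x d = 0) \/ (exists i, val w = inr (x, d, i))).
Proof.
move=> cxd; case: (posnP (k x d)) => hk.
  by exists (sd_emb d); split; [rewrite covers_sd_emb cxd hk | left].
have ok : sd_ok (inr (x, d, inord 0) : sd_raw k) by rewrite /= cxd (inord_lt_k hk).
exists (sd_vertex ok); split; last by right; eexists.
apply: coversI; first by rewrite /plt -val_eqE /= (ple_refl HP).
move=> z; have hz := valP z; case E: (val z) hz => [c|[[x' y'] i']] hz.
  rewrite (sd_embE E) plt_sd_emb /plt -val_eqE /= => /andP [ne lxc] lcx.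
  by move: ne; rewrite (ple_anti HP lcx lxc) eqxx.
rewrite /plt -!val_eqE /= E /= inr_eq !xpair_eqE.
move=> lxx' /andP [ne /orP [/andP [/andP [/eqP ex /eqP ey] li]|ly'x]].
  subst x' y'; move: ne; rewrite !eqxx /= -val_eqE /= (inord_lt_k hk).
  rewrite (inord_lt_k hk) in li.
  by rewrite eqn_leq li.
case/andP: hz => cx'y' _.
move: (covers_plt cx'y') => /(plt_nge HP); by rewrite (ple_trans HP ly'x lxx').
Qed.

Lemma Ndiag_subdiv_orig (u v : Q) : Ndiag u v -> exists x y, u = sd_emb x /\ v = sd_emb y.
Proof.
case/existsP => a /existsP [d /and4P [cuv cav cud /andP [nad _]]].
have hu : exists x, val u = inl x.
  case E: (val u) => [x|[[x y] i]]; first by exists x.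
  have e := dummy_upper_cover_uniq E cuv cud; subst d.
  by rewrite (covers_le cav) in nad.
have hv : exists y, val v = inl y.
  case E: (val v) => [y|[[x y] i]]; first by exists y.
  have e := dummy_lower_cover_uniq E cuv cav; subst a.
  by rewrite (covers_le cud) in nad.
case: hu => x Ex; case: hv => y Ey.
by exists x, y; rewrite (sd_embE Ex) (sd_embE Ey).
Qed.

Lemma Ndiag_sd_of_subdiv (x y : P) :
  Ndiag (sd_emb x) (sd_emb y) -> Ndiag_sd (fun a b => 0 < k a b) x y.
Proof.
case/existsP => wa /existsP [wd /and4P [cxy cay cxd /andP [nad _]]].
move: cxy; rewrite covers_sd_emb => /andP [cxy /eqP k0].
have [a ca'y Ea] := lower_covers_sd_emb cay.
have [d cxd' Ed] := upper_covers_sd_emb cxd.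
apply: (Ndiag_sdI (a := a) (d := d)) => //; rewrite ?k0 //.
- by apply: contraNneq nad => eax; rewrite (Ea _) ?eax // (covers_le cxd).
- by apply: contraNneq nad => edy; rewrite (Ed _) ?edy // (covers_le cay).
- rewrite /= !lt0n; case: eqP => [ka|//]; case: eqP => [kd|//].
  by move: nad; rewrite (Ea ka) (Ed kd).
Qed.

Lemma Ndiag_subdiv_of_sd (x y : P) :
  Ndiag_sd (fun a b => 0 < k a b) x y -> Ndiag (sd_emb x) (sd_emb y).
Proof.
case/and3P => cxy nk /existsP [a' /existsP [d' /and5P [ca'y na'x cxd' nd'y H]]].
have k0 : k x y = 0 by move: nk; rewrite lt0n negbK => /eqP.
have [wa [cwa Ha]] := exists_lower_cover_sd ca'y.
have [wd [cwd Hd]] := exists_upper_cover_sd cxd'.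
apply/existsP; exists wa; apply/existsP; exists wd.
rewrite /isN covers_sd_emb cxy k0 eqxx cwa cwd /=.
have n1 : ~~ le d' a'.
  apply/negP => l; apply: (covers_gap cxy (covers_plt cxd')).
  exact: (ple_plt_trans HP l (covers_plt ca'y)).
have n2 : ~~ le y d'.
  apply/negP => l; case: (covers_interval cxd' (covers_le cxy) l) => e.
    by move: (covers_neq cxy); rewrite e eqxx.
  by rewrite e eqxx in nd'y.
have n3 : ~~ le a' x.
  apply/negP => l; case: (covers_interval ca'y l (covers_le cxy)) => e.
    by rewrite e eqxx in na'x.
  by move: (covers_neq cxy); rewrite e eqxx.
have n4 : ~~ le y x by apply: (plt_nge HP); exact: covers_plt cxy.
rewrite /incomp /=.
case: Ha => [[Ea ka]|[i Ea]]; case: Hd => [[Ed kd]|[j Ed]]; rewrite Ea Ed /=.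
- by rewrite n1 andbT; move: H; rewrite ka kd.
- by rewrite n3 n1.
- by rewrite n2 n1.
- by rewrite !xpair_eqE (negbTE na'x) /= (negbTE n4) eq_sym (negbTE na'x).
Qed.

Lemma Ndiag_subdiv_emb (x y : P) :
  Ndiag (sd_emb x) (sd_emb y) = Ndiag_sd (fun a b => 0 < k a b) x y.
Proof. by apply/idP/idP; [apply: Ndiag_sd_of_subdiv | apply: Ndiag_subdiv_of_sd]. Qed.

Lemma Nfree_subdivP : Nfree Q <-> forall x y, ~~ Ndiag_sd (fun a b => 0 < k a b) x y.
Proof.
split.
  move=> H x y; apply/negP; rewrite -Ndiag_subdiv_emb => /existsP [a /existsP [d h]].
  move/forallP: H => /(_ a) /forallP /(_ (sd_emb x)) /forallP /(_ (sd_emb y)).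
  by move=> /forallP /(_ d); rewrite h.
move=> H; apply/forallP => a; apply/forallP => b; apply/forallP => c; apply/forallP => d.
apply/negP => h.
have nd : Ndiag b c by apply/existsP; exists a; apply/existsP; exists d.
have [x [y [eb ec]]] := Ndiag_subdiv_orig nd; subst b c.
by move: nd; rewrite Ndiag_subdiv_emb (negbTE (H x y)).
Qed.
End Subdivision.

Lemma iso_sym (Q R : fposet) : iso Q R -> iso R Q.
Proof.
case=> f [[g fg gf] H]; exists g; split; first exact: (Bijective gf fg).
by move=> x y; rewrite -H !gf.
Qed.

Lemma iso_trans (Q R U : fposet) : iso Q R -> iso R U -> iso Q U.
Proof.
case=> f [fb H] [h [hb H']]; exists (h \o f); split; first exact: bij_comp.
by move=> x y; rewrite /= H' H.
Qed.

Section Transport.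
Variables Q R : fposet.
Variable f : Q -> R.
Hypothesis fb : bijective f.
Hypothesis fle : forall x y, ple R (f x) (f y) = ple Q x y.

Let finj : injective f := bij_inj fb.

Lemma plt_morph x y : plt (f x) (f y) = plt x y.
Proof. by rewrite /plt fle (inj_eq finj). Qed.

Lemma forall_bij (p : R -> bool) : [forall z, p z] = [forall z, p (f z)].
Proof.
case: fb => g fg gf; apply/forallP/forallP => H z //.
by rewrite -(gf z).
Qed.

Lemma exists_bij (p : R -> bool) : [exists z, p z] = [exists z, p (f z)].
Proof.
case: fb => g fg gf; apply/existsP/existsP => [[z h]|[z h]]; last by exists (f z).
by exists (g z); rewrite gf.
Qed.

Lemma covers_morph x y : covers (f x) (f y) = covers x y.
Proof.
rewrite /covers plt_morph forall_bij; congr (_ && _); apply: eq_forallb => z.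
by rewrite !plt_morph.
Qed.

Lemma incomp_morph x y : incomp (f x) (f y) = incomp x y.
Proof. by rewrite /incomp !fle. Qed.

Lemma isN_morph a b c d : isN (f a) (f b) (f c) (f d) = isN a b c d.
Proof. by rewrite /isN !covers_morph incomp_morph. Qed.

Lemma Ndiag_morph b c : Ndiag (f b) (f c) = Ndiag b c.
Proof.
rewrite /Ndiag exists_bij; apply: eq_existsb => a; rewrite exists_bij; apply: eq_existsb => d.
by rewrite isN_morph.
Qed.

Lemma Nfree_morph : Nfree R = Nfree Q.
Proof.
rewrite /Nfree forall_bij; apply: eq_forallb => a; rewrite forall_bij; apply: eq_forallb => b.
rewrite forall_bij; apply: eq_forallb => c; rewrite forall_bij; apply: eq_forallb => d.
by rewrite isN_morph.
Qed.

Variable k : Q -> Q -> nat.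
Variable k' : R -> R -> nat.
Hypothesis hk : forall a b, k' (f a) (f b) = k a b.

Lemma ltn_kmaxS_map x y i : i < k x y -> i < (kmax k').+1.
Proof. by rewrite -hk; apply: ltn_kmaxS. Qed.

Definition sd_map_raw (r : sd_raw k) : sd_raw k' :=
  match r with inl a => inl (f a) | inr (x, y, i) => inr (f x, f y, inord i) end.

Lemma sd_map_ok r : sd_ok r -> sd_ok (sd_map_raw r).
Proof.
case: r => [a|[[x y] i]] //= /andP [cxy hi].
by rewrite covers_morph cxy hk inordK // (ltn_kmaxS_map hi).
Qed.

Definition sd_map (u : subdiv k) : subdiv k' :=
  exist _ (sd_map_raw (val u)) (sd_map_ok (valP u)).

Lemma ple_sd_map u v : ple (subdiv k') (sd_map u) (sd_map v) = ple (subdiv k) u v.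
Proof.
case: u v => [[a|[[x y] i]] hu] [[b|[[x' y'] j]] hv] //=; rewrite ?fle //.
case/andP: hu => _ /ltn_kmaxS_map hi; case/andP: hv => _ /ltn_kmaxS_map hj.
by rewrite !xpair_eqE !(inj_eq finj) !inordK.
Qed.

Lemma sd_map_bij : bijective sd_map.
Proof.
have [g fg gf] := fb.
have hk' a b : k (g a) (g b) = k' a b by rewrite -hk !gf.
have ok (r : sd_raw k') : sd_ok r ->
    sd_ok (match r with inl a => inl (g a) | inr (x, y, i) => inr (g x, g y, inord i) end
           : sd_raw k).
  case: r => [a|[[x y] i]] //= /andP [cxy hi].
  have hi' : i < (kmax k).+1 by apply: (ltn_kmaxS (x := g x) (y := g y)); rewrite hk'.
  by rewrite -covers_morph !gf cxy hk' inordK.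
exists (fun u : subdiv k' => (sd_vertex (ok _ (valP u)) : subdiv k)).
  case=> [[a|[[x y] i]] hu]; apply: val_inj => //=; rewrite ?fg //.
  case/andP: hu => _ hi; congr (inr (_, _, _)); rewrite ?fg //.
  by apply: val_inj; rewrite /= (inordK (ltn_kmaxS_map hi)) inordK.
case=> [[a|[[x y] i]] hu]; apply: val_inj => //=; rewrite ?gf //.
case/andP: hu => _ hi; congr (inr (_, _, _)); rewrite ?gf //.
have hi' : i < (kmax k).+1 by apply: (ltn_kmaxS (x := g x) (y := g y)); rewrite hk'.
by apply: val_inj; rewrite /= (inordK hi') inordK.
Qed.

Lemma iso_subdiv_map : iso (subdiv k) (subdiv k').
Proof. exists sd_map; split; [exact: sd_map_bij | exact: ple_sd_map]. Qed.
End Transport.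

Lemma iso_subdiv_eq (Q : fposet) (k k' : Q -> Q -> nat) :
  (forall a b, k' a b = k a b) -> iso (subdiv k) (subdiv k').
Proof. move=> h; apply: (iso_subdiv_map (f:=id)) => //; exact: (Bijective (g:=id)). Qed.

Lemma sd_emb_bij0 (P : fposet) (k : P -> P -> nat) :
  (forall a b, k a b = 0) -> bijective (@sd_emb P k).
Proof.
move=> h0.
exists (fun u : subdiv k => match val u with inl a => a | inr (x, _, _) => x end) => //.
case=> [[a|[[x y] i]] hu]; apply: val_inj => //=.
by move: hu => /= /andP [_]; rewrite h0.
Qed.

Lemma iso_subdiv0 (P : fposet) (k : P -> P -> nat) : (forall a b, k a b = 0) -> iso P (subdiv k).
Proof. move=> h0; exists (@sd_emb P k); split; [exact: sd_emb_bij0 | by []]. Qed.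

Section SubdivSubdiv.
Variable P : fposet.
Hypothesis HP : is_poset P.
Variable k : P -> P -> nat.
Local Notation Q := (subdiv k).
Variable j : Q -> Q -> nat.
Hypothesis j_Ndiag : forall u v, 0 < j u v -> Ndiag u v.

Definition ksum (x y : P) := k x y + j (sd_emb k x) (sd_emb k y).

Definition sd_base (u : Q) : P := match val u with inl a => a | inr (x, _, _) => x end.

Lemma sd_emb_eq (x y : P) : (sd_emb k x == sd_emb k y) = (x == y).
Proof. by rewrite -val_eqE. Qed.

Lemma sd2_dummy (u v : Q) (i : 'I_(kmax j).+1) : sd_ok (inr (u, v, i) : sd_raw j) ->
  exists x y, [/\ u = sd_emb k x, v = sd_emb k y, covers x y, k x y = 0 &
    i < ksum x y].
Proof.
case/andP => cuv hi; have Nuv := j_Ndiag (leq_ltn_trans (leq0n _) hi).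
have [x [y [eu ev]]] := Ndiag_subdiv_orig HP Nuv; subst u v.
move: cuv; rewrite covers_sd_emb // => /andP [cxy /eqP k0].
by exists x, y; split; rewrite // /ksum k0.
Qed.

Lemma ksum_high (x y : P) i : ~~ (i < k x y) -> i < ksum x y -> covers x y /\ k x y = 0.
Proof.
move=> hik hi; have jp : 0 < j (sd_emb k x) (sd_emb k y).
  by rewrite lt0n; apply: contraNneq hik => j0; rewrite /ksum j0 addn0 in hi.
by have := Ndiag_covers (j_Ndiag jp); rewrite covers_sd_emb // => /andP [-> /eqP].
Qed.

Lemma ltn_kmax_ksum (x y : P) i : i < k x y -> i < (kmax ksum).+1.
Proof. by move=> hi; apply: (ltn_kmaxS (k := ksum) (x := x) (y := y)); apply: ltn_addr. Qed.

Definition sd2_map_raw (r : sd_raw j) : sd_raw ksum :=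
  match r with
  | inl q => match val q with inl a => inl a | inr (x, y, i) => inr (x, y, inord i) end
  | inr (u, v, i) => inr (sd_base u, sd_base v, inord i)
  end.

Lemma sd2_map_ok r : sd_ok r -> sd_ok (sd2_map_raw r).
Proof.
case: r => [[[a|[[x y] i]] hq]|[[u v] i]] //=.
  by case/andP: hq => cxy hi; rewrite cxy inordK ?ltn_addr // (ltn_kmax_ksum hi).
by case/sd2_dummy => x [y [-> -> cxy _ hi]]; rewrite /= cxy inordK // (ltn_kmaxS hi).
Qed.

Definition sd2_map (u : subdiv j) : subdiv ksum :=
  exist _ (sd2_map_raw (val u)) (sd2_map_ok (valP u)).

Lemma ple_sd2_map u v : ple (subdiv ksum) (sd2_map u) (sd2_map v) = ple (subdiv j) u v.
Proof.
case: u v => [[q|[[u1 v1] i]] hu] [[q'|[[u2 v2] i']] hv].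
- move: hu hv; case: q => [[a|[[x y] i]] hq]; case: q' => [[b|[[x' y'] i']] hq'] _ _ //=.
  case/andP: hq => _ /ltn_kmax_ksum hi; case/andP: hq' => _ /ltn_kmax_ksum hi'.
  by rewrite !inordK.
- have [x [y [eu ev _ k0 _]]] := sd2_dummy hv; subst u2 v2.
  move: hu; case: q => [[a|[[x1 y1] i1]] hq] _ //=; case/andP: hq => _ hi1; rewrite !xpair_eqE.
  by case: (eqVneq x1 x) => [e1|//]; case: (eqVneq y1 y) => [e2|//]; rewrite e1 e2 k0 in hi1.
- have [x [y [eu ev _ k0 _]]] := sd2_dummy hu; subst u1 v1.
  move: hv; case: q' => [[a|[[x1 y1] i1]] hq] _ //=; case/andP: hq => _ hi1; rewrite !xpair_eqE.
  by case: (eqVneq x x1) => [e1|//]; case: (eqVneq y y1) => [e2|//]; rewrite -e1 -e2 k0 in hi1.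
- have [x [y [eu ev _ _ /ltn_kmaxS hi]]] := sd2_dummy hu; subst u1 v1.
  have [x' [y' [eu ev _ _ /ltn_kmaxS hi']]] := sd2_dummy hv; subst u2 v2.
  by rewrite /= !xpair_eqE !sd_emb_eq !inordK.
Qed.

Lemma inord_inord (A B : nat) (i : 'I_A.+1) :
  i < B.+1 -> (inord (inord i : 'I_B.+1) : 'I_A.+1) = i.
Proof. by move=> h; apply: val_inj; rewrite /= (inordK h) inordK. Qed.

Definition sd2_inv_raw (r : sd_raw ksum) : sd_raw j :=
  match r with
  | inl a => inl (sd_emb k a)
  | inr (x, y, i) => if i < k x y then inl (insubd (sd_emb k x) (inr (x, y, inord i) : sd_raw k))
                     else inr (sd_emb k x, sd_emb k y, inord i)
  end.

Lemma sd2_inv_ok r : sd_ok r -> sd_ok (sd2_inv_raw r).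
Proof.
case: r => [a|[[x y] i]] //= /andP [cxy hi]; case: ifPn => hik //.
have [cxy' k0] := ksum_high hik hi.
have hi' : i < j (sd_emb k x) (sd_emb k y) by rewrite /ksum k0 in hi.
by rewrite /= covers_sd_emb // cxy' k0 eqxx inordK // (ltn_kmaxS hi').
Qed.

Definition sd2_inv (w : subdiv ksum) : subdiv j :=
  exist _ (sd2_inv_raw (val w)) (sd2_inv_ok (valP w)).

Lemma sd2_map_bij : bijective sd2_map.
Proof.
exists sd2_inv.
  case=> [[q|[[u v] i]] hu]; apply: val_inj.
    move: hu; case: q => [[a|[[x y] i]] hq] _ /=; first by congr inl; apply: val_inj.
    case/andP: (hq) => cxy hi.
    rewrite inordK ?hi; last exact: ltn_kmax_ksum hi.
    by congr inl; apply: val_inj; rewrite val_insubd /= inord_val cxy hi.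
  have [x [y [eu ev _ k0 hi]]] := sd2_dummy hu; subst u v.
  by rewrite /= inordK ?k0 /= ?inord_val // (ltn_kmaxS hi).
case=> [[a|[[x y] i]] hw]; apply: val_inj => //=.
case/andP: (hw) => cxy hi; case: ifPn => hik /=.
  have ok : sd_ok (inr (x, y, inord i) : sd_raw k) by rewrite /= cxy (inord_lt_k hik) hik.
  by rewrite val_insubd ok /= inord_inord // (ltn_kmaxS hik).
have [_ k0] := ksum_high hik hi.
rewrite inord_inord // (ltn_kmaxS (k := j) (x := sd_emb k x) (y := sd_emb k y)) //.
by rewrite -[j _ _]add0n -k0.
Qed.

Lemma iso_subdiv_subdiv : iso (subdiv j) (subdiv ksum).
Proof. exists sd2_map; split; [exact: sd2_map_bij | exact: ple_sd2_map]. Qed.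

End SubdivSubdiv.

Section Algorithm.
Variable P : fposet.
Hypothesis HP : is_poset P.

Definition kset (S : {set P * P}) (x y : P) : nat := nat_of_bool ((x, y) \in S).
Definition SN2_set : {set P * P} := [set e | SN2_edge e.1 e.2].

Local Notation Ndiag_in S := (Ndiag_sd (fun a b => (a, b) \in S)).

Lemma Ndiag_sd_kset (S : {set P * P}) x y :
  Ndiag_sd (fun a b => 0 < kset S a b) x y = Ndiag_in S x y.
Proof. by apply: eq_Ndiag_sd => a b; rewrite /kset lt0b. Qed.

Lemma Nfree_kset (R : fposet) S : iso R (subdiv (kset S)) ->
  (Nfree R <-> forall x y, ~~ Ndiag_in S x y).
Proof.
case=> f [fb fle]; rewrite -(Nfree_morph fb fle).
split; first by move/(Nfree_subdivP HP) => H x y; rewrite -Ndiag_sd_kset.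
by move=> H; apply/(Nfree_subdivP HP) => x y; rewrite Ndiag_sd_kset.
Qed.

Lemma add_dummy_kset (S : {set P * P}) x y : (x, y) \notin S ->
  Ndiag (sd_emb (kset S) x) (sd_emb (kset S) y) ->
  iso (add_dummy (sd_emb (kset S) x) (sd_emb (kset S) y)) (subdiv (kset ((x, y) |: S))).
Proof.
move=> nS Nxy.
have j_Ndiag (u v : subdiv (kset S)) :
    0 < nat_of_bool ((u, v) == (sd_emb (kset S) x, sd_emb (kset S) y)) -> Ndiag u v.
  by rewrite lt0b xpair_eqE => /andP [/eqP-> /eqP->].
apply: (iso_trans (iso_subdiv_subdiv HP j_Ndiag)); apply: iso_subdiv_eq => a b.
rewrite /ksum /kset !xpair_eqE !sd_emb_eq in_setU1 xpair_eqE.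
case: (eqVneq a x) => [->|_]; last by rewrite addn0.
by case: (eqVneq b y) => [->|_]; rewrite ?(negbTE nS) ?addn0.
Qed.

Lemma step_kset (R R' : fposet) S : iso R (subdiv (kset S)) -> step R R' ->
  exists x y, Ndiag_in S x y /\ iso R' (subdiv (kset ((x, y) |: S))).
Proof.
case=> f [fb fle] [b [c [Nbc hR']]].
have Nfbc : Ndiag (f b) (f c) by rewrite (Ndiag_morph fb fle).
have [x [y [eb ec]]] := Ndiag_subdiv_orig HP Nfbc.
have Nxy : Ndiag_sd (fun a b => 0 < kset S a b) x y by rewrite -Ndiag_subdiv_emb // -eb -ec.
exists x, y; split; first by rewrite -Ndiag_sd_kset.
apply: (iso_trans hR'); apply: (iso_trans (iso_subdiv_map fb fle (k' := fun u v =>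
  nat_of_bool ((u, v) == (f b, f c))) _)).
  by move=> a a'; rewrite !xpair_eqE !(inj_eq (bij_inj fb)).
rewrite eb ec; apply: add_dummy_kset; last by rewrite -eb -ec.
by move: (Ndiag_sd_notin Nxy); rewrite /kset lt0b.
Qed.

Lemma run_kset (s : seq fposet) : forall (R : fposet) S, iso R (subdiv (kset S)) ->
  S \subset SN2_set -> run R s ->
  exists S', [/\ iso (last R s) (subdiv (kset S')), S' \subset SN2_set & #|S'| = #|S| + size s].
Proof.
elim: s => [|Q s IH] R S hR hS /=.
  by move=> _; exists S; rewrite addn0.
case=> st rn.
have [x [y [dg hQ]]] := step_kset hR st.
have nS : (x, y) \notin S by exact: (Ndiag_sd_notin dg).
have hS' : (x, y) |: S \subset SN2_set.
  rewrite subUset hS andbT sub1set inE /=.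
  apply: (Ndiag_sd_sub_SN2 HP (S := fun a b => (a, b) \in S)) dg => a b h.
  by move/subsetP: hS => /(_ _ h); rewrite inE.
have [S' [h1 h2 h3]] := IH Q _ hQ hS' rn.
by exists S'; split => //; rewrite h3 cardsU1 nS addnS.
Qed.

Lemma iso_kset0 : iso P (subdiv (kset set0)).
Proof. by apply: iso_subdiv0 => a b; rewrite /kset in_set0. Qed.

Lemma kset_final (S : {set P * P}) : S \subset SN2_set ->
  (forall x y, ~~ Ndiag_in S x y) -> S = SN2_set.
Proof.
move=> hS H; apply/eqP; rewrite eqEsubset hS /=.
apply/subsetP => [[x y]]; rewrite inE /= => t.
exact: (SN2_edge_min H t).
Qed.

Lemma Ndiag_Ndiag1 (x y : P) : Ndiag x y = Ndiag1 x y.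
Proof.
have h0 : forall a b : P, (fun _ _ => 0) a b = 0 by [].
have fb := sd_emb_bij0 h0.
rewrite -(Ndiag_morph (f := sd_emb (fun _ _ : P => 0)) fb) //.
by rewrite Ndiag_subdiv_emb //; apply: eq_Ndiag_sd.
Qed.

Lemma iso_SN2 : iso (S_N (S_N P)) (subdiv (kset SN2_set)).
Proof.
pose k1 := fun b c : P => nat_of_bool (Ndiag b c).
have j_Ndiag (u v : subdiv k1) : 0 < nat_of_bool (Ndiag u v) -> Ndiag u v by rewrite lt0b.
apply: (iso_trans (iso_subdiv_subdiv HP j_Ndiag)).
apply: iso_subdiv_eq => x y.
rewrite /ksum /kset /SN2_set inE /= /SN2_edge Ndiag_subdiv_emb // /k1 Ndiag_Ndiag1.
have -> : Ndiag_sd (fun a b => 0 < nat_of_bool (Ndiag a b)) x y = Ndiag2 x y.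
  by rewrite /Ndiag2; apply: eq_Ndiag_sd => a b; rewrite lt0b Ndiag_Ndiag1.
case: (boolP (Ndiag1 x y)) => [n1|_]; last by case: (Ndiag2 x y).
by case: (boolP (Ndiag2 x y)) => // /Ndiag_sd_notin; rewrite n1.
Qed.

Lemma run_final (s : seq fposet) : run P s -> Nfree (last P s) ->
  iso (last P s) (subdiv (kset SN2_set)) /\ size s = #|SN2_set|.
Proof.
move=> rs nf; have [S [hS sub cardS]] := run_kset iso_kset0 (sub0set _) rs.
rewrite -(kset_final sub ((Nfree_kset hS).1 nf)) cardS cards0.
by split.
Qed.

Lemma no_infinite_run : ~ exists f : nat -> fposet, f 0 = P /\ forall m, step (f m) (f m.+1).
Proof.
case=> f [f0 fs].
have reach m : exists S, [/\ iso (f m) (subdiv (kset S)), S \subset SN2_set & #|S| = m].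
  elim: m => [|m [S [hS sub cardS]]].
    by exists set0; rewrite f0 cards0; split => //; [exact: iso_kset0 | exact: sub0set].
  have [S' [hS' sub' cardS']] := run_kset (s := [:: f m.+1]) hS sub (conj (fs m) I).
  by exists S'; rewrite cardS' cardS addn1.
have [S [_ /subset_leq_card]] := reach #|SN2_set|.+1.
by move=> le_S cardS; rewrite cardS ltnn in le_S.
Qed.

Lemma Nfree_SN2 : Nfree (S_N (S_N P)).
Proof.
apply/(Nfree_kset iso_SN2) => x y.
by rewrite (eq_Ndiag_sd (S' := @SN2_edge P)) ?Ndiag_sd_SN2_edge // => a b; rewrite inE.
Qed.

Lemma valid_subdiv_SN2 : valid_subdiv (kset SN2_set).
Proof. by move=> x y; rewrite /kset lt0b inE => /SN2_edge_covers. Qed.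

Lemma kset_SN2_min (k : P -> P -> nat) : Nfree (subdiv k) -> forall x y, kset SN2_set x y <= k x y.
Proof.
move=> /(Nfree_subdivP HP) noN x y; rewrite /kset inE /=.
by case: (boolP (SN2_edge x y)) => // /(SN2_edge_min noN).
Qed.

End Algorithm.

Theorem theorem2 (P : fposet) (HP : is_poset P) :
  (* the algorithm always stops: there is no infinite run *)
  (~ exists f : nat -> fposet, f 0 = P /\ forall m, step (f m) (f m.+1)) /\
  (* whatever the choices, it stops on S_N(S_N(P)) *)
  (forall s : seq fposet, run P s -> Nfree (last P s) -> iso (last P s) (S_N (S_N P))) /\
  (* the number of steps does not depend on the choices *)
  (forall s t : seq fposet, run P s -> Nfree (last P s) ->
     run P t -> Nfree (last P t) -> size s = size t) /\
  (* S_N(S_N(P)) is the smallest N-free barycentric subdivision of Diag(P) *)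
  Nfree (S_N (S_N P)) /\
  (exists k0 : P -> P -> nat,
     valid_subdiv k0 /\ iso (S_N (S_N P)) (subdiv k0) /\
     forall k : P -> P -> nat, valid_subdiv k -> Nfree (subdiv k) ->
       forall x y : P, k0 x y <= k x y).
Proof.
split; first exact: no_infinite_run.
split.
  move=> s rs nf; have [hs _] := run_final HP rs nf.
  exact: iso_trans hs (iso_sym (iso_SN2 HP)).
split.
  move=> s t rs nfs rt nft.
  by rewrite (run_final HP rs nfs).2 (run_final HP rt nft).2.
split; first exact: Nfree_SN2.
exists (kset (SN2_set P)); split; first exact: valid_subdiv_SN2.
split; first exact: iso_SN2.
by move=> k _; apply: kset_SN2_min.
Qed.
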